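(* Let $t$ be a positive rational number. If $G$ is a minimally $t$-tough split graph, then $G$ has a vertex of degree $\lceil 2t\rceil$.
   Context: All graphs are finite, simple and undirected. A graph is split if its vertex set can be partitioned into a clique and an independent set. $\omega(H)$ denotes the number of components of $H$. A cutset of $G$ is a vertex set $S$ with $G-S$ disconnected. For positive real $t$, $G$ is $t$-tough if $\omega(G-S)\le |S|/t$ for every cutset $S$; the toughness $\tau(G)$ is the largest such $t$, with $\tau(K_n)=\infty$ for all $n\ge1$. $G$ is minimally $t$-tough if $\tau(G)=t$ and $\tau(G-e)<t$ for every edge $e$ of $G$. *)

From mathcomp Require Import all_boot all_order all_algebra.
Set Implicit Arguments. Unset Strict Implicit. Unset Printing Implicit Defensive.
Import Order.TTheory GRing.Theory Num.Theory.

Local Open Scope ring_scope.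

Section Graphs.
Variable V : finType.

Definition simple_graph (g : rel V) : Prop := symmetric g /\ irreflexive g.

Definition del_verts (g : rel V) (S : {set V}) : rel V :=
  [rel x y | [&& g x y, x \notin S & y \notin S]].

Definition ncomp (g : rel V) (S : {set V}) : nat :=
  n_comp (del_verts g S) (~: S).

Definition cutset (g : rel V) (S : {set V}) : bool := (1 < ncomp g S)%N.

Definition tough (g : rel V) (t : rat) : Prop :=
  forall S : {set V}, cutset g S -> (ncomp g S)%:R <= #|S|%:R / t.

Definition toughness_is (g : rel V) (t : rat) : Prop :=
  tough g t /\ forall t' : rat, t < t' -> ~ tough g t'.

Definition toughness_lt (g : rel V) (t : rat) : Prop := ~ tough g t.

Definition del_edge (g : rel V) (u v : V) : rel V :=
  [rel x y | g x y && ~~ (((x == u) && (y == v)) || ((x == v) && (y == u)))].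

Definition minimally_tough (g : rel V) (t : rat) : Prop :=
  toughness_is g t /\
  forall u v : V, g u v -> toughness_lt (del_edge g u v) t.

Definition is_clique (g : rel V) (K : {set V}) : Prop :=
  forall x y, x \in K -> y \in K -> x != y -> g x y.

Definition is_indep (g : rel V) (I : {set V}) : Prop :=
  forall x y, x \in I -> y \in I -> ~~ g x y.

Definition split_graph (g : rel V) : Prop :=
  exists K I : {set V}, [/\ K :&: I = set0, K :|: I = setT,
                            is_clique g K & is_indep g I].

Definition degree (g : rel V) (x : V) : nat := #|[set y | g x y]|.

End Graphs.

(* Write K = ~: I for the clique part and c(H) for the number of components
   of H.  If an edge uw of K has a common neighbour v in I, minimality gives S
   with |S| < t c(G - uw - S), and toughness of G forces
   c(G - uw - S) > c(G - S): uw is a bridge of G - S.  Hence u, w lie outside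
   S while the rest of K and every common neighbour of u and w (v in
   particular) lie in S, and G - uw - S has at most 2 + |iso| components, iso
   being the vertices of I isolated in G - S.  Counting then shows that no
   other vertex of I is adjacent to u and that |K| - 1 < (1 + |I|) t.  So a
   vertex v of I of degree at least 2 has a neighbourhood N private among I;
   comparing t |I| <= |K - N| and 2t <= |N| (separate v from a non-neighbour)
   with the last inequality is absurd.  Thus the vertices of I have degree at
   most 1, a vertex of degree 1 exists since G is tough and not complete, and
   then 2t <= 1 gives ceil(2t) = 1. *)

From mathcomp Require Import all_boot all_order all_algebra.
From mathcomp Require Import lra.
Import Order.TTheory GRing.Theory Num.Theory.

Set Implicit Arguments. Unset Strict Implicit. Unset Printing Implicit Defensive.

Section SimpleGraphs.
Variable V : finType.
Implicit Types (h : rel V) (S P R : {set V}).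

Definition nbhd h x : {set V} := [set y | h x y].

Lemma degreeE h x : degree h x = #|nbhd h x|.
Proof. by []. Qed.

Lemma del_edge_sym h u w : symmetric h -> symmetric (del_edge h u w).
Proof.
move=> sh x y; rewrite /del_edge /= sh.
by case: (x == u); case: (y == w); case: (x == w); case: (y == u).
Qed.

Lemma del_verts_sym h S : symmetric h -> symmetric (del_verts h S).
Proof. by move=> sh x y; rewrite /del_verts /= sh [(x \notin S) && _]andbC. Qed.

Lemma connect_del_verts_notin h S x y :
  x \notin S -> connect (del_verts h S) x y -> y \notin S.
Proof.
move=> xS /connectP[p]; elim: p x xS => [|a p IHp] x xS /=; first by move=> _ ->.
by case/andP=> /and3P[_ _ aS]; apply: IHp.
Qed.

Lemma connect_del_verts_isolated h S x y :
  nbhd h x \subset S -> connect (del_verts h S) x y -> y = x.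
Proof.
move=> /subsetP NxS /connectP[[|a p] /=]; first by move=> _ ->.
by case/andP=> /and3P[hxa _ aS]; have := NxS a; rewrite inE hxa (negbTE aS) => /(_ isT).
Qed.

Lemma ncomp_le h S R : symmetric h ->
  (forall x, x \notin S -> exists2 r, r \in R & connect (del_verts h S) x r) ->
  (ncomp h S <= #|R|)%N.
Proof.
move=> sh cover; have csym := sym_connect_sym (del_verts_sym S sh).
apply: leq_trans (leq_imset_card (fingraph.root (del_verts h S)) R).
apply/subset_leq_card/subsetP => x /andP[/eqP rootx]; rewrite /= inE => xS.
have [r rR xr] := cover x xS; apply/imsetP; exists r => //.
by rewrite -rootx; apply/(fingraph.rootP csym).
Qed.

Lemma ncomp_ge h S P r : symmetric h -> P \subset ~: S ->
  {in P, forall x, x != r -> nbhd h x \subset S} -> (#|P| <= ncomp h S)%N.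
Proof.
move=> sh /subsetP PS isoP; have csym := sym_connect_sym (del_verts_sym S sh).
have root_inj : {in P &, injective (fingraph.root (del_verts h S))}.
  move=> x y xP yP /(fingraph.rootP csym) xy.
  have [xr|/(isoP x xP) Nx] := eqVneq x r; last first.
    exact/esym/(connect_del_verts_isolated Nx).
  have [yr|/(isoP y yP) Ny] := eqVneq y r; first by rewrite xr yr.
  by rewrite csym in xy; exact: connect_del_verts_isolated Ny xy.
rewrite -(card_in_imset root_inj); apply/subset_leq_card/subsetP => _ /imsetP[x xP ->].
have xS : x \notin S by have := PS x xP; rewrite inE.
by rewrite !inE /= (roots_root csym) (connect_del_verts_notin xS (connect_root _ x)).
Qed.

Lemma nbhd_other h v x : (1 < degree h v)%N -> exists2 x', h v x' & x' != x.
Proof.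
rewrite degreeE => /card_gt1P[a [b [aN bN ab]]]; rewrite !inE in aN bN.
by have [ax|] := eqVneq a x; [exists b; rewrite // -ax eq_sym | exists a].
Qed.

Lemma nonadj_of_degree_le1 h v : symmetric h -> ~ is_clique h [set: V] ->
  (degree h v <= 1)%N -> exists2 z, z != v & ~~ h v z.
Proof.
move=> sh ncomplete deg_le1.
have [/existsP[x /existsP[y /andP[xy hxy]]]|/existsPn all_adj] :=
  boolP [exists x, exists y, (x != y) && ~~ h x y]; last first.
  case: ncomplete => x y _ _ xy.
  by move/existsPn: (all_adj x) => /(_ y); rewrite xy negbK.
have [<-|xv] := eqVneq x v; first by exists y; rewrite // eq_sym.
have [<-|yv] := eqVneq y v; first by exists x; rewrite // sh.
have [hvx|] := boolP (h v x); last by exists x.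
have [hvy|] := boolP (h v y); last by exists y.
have : [set x; y] \subset nbhd h v by apply/subsetP => a; rewrite !inE => /orP[]/eqP->.
by move/subset_leq_card; rewrite cards2 xy -degreeE => /leq_trans/(_ deg_le1).
Qed.

Lemma split_setC (K I : {set V}) : K :&: I = set0 -> K :|: I = setT -> K = ~: I.
Proof.
move=> /setP KI /setP KUI; apply/setP => x; move: (KI x) (KUI x); rewrite !inE.
by case: (x \in K); case: (x \in I).
Qed.

End SimpleGraphs.

Local Open Scope ring_scope.

Section Toughness.
Variables (V : finType) (g : rel V) (t : rat).
Hypotheses (t0 : 0 < t) (tg : tough g t).

Lemma tough_isolated_le (S P : {set V}) r : symmetric g -> P \subset ~: S ->
  {in P, forall x, x != r -> nbhd g x \subset S} -> (1 < #|P|)%N ->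
  #|P|%:R * t <= #|S|%:R.
Proof.
move=> sg PS isoP P2; have P_le := ncomp_ge sg PS isoP.
have := tg (leq_trans P2 P_le); rewrite ler_pdivlMr //; apply: le_trans.
by rewrite ler_pM2r // ler_nat.
Qed.

Lemma tough_ncomp_lt (h : rel V) (S : {set V}) : cutset h S ->
  #|S|%:R < (ncomp h S)%:R * t -> (ncomp g S < ncomp h S)%N.
Proof.
move=> cutS ltS; rewrite ltnNge; apply/negP => le_hg.
have := tg (leq_trans cutS le_hg); rewrite ler_pdivlMr // => le_gS.
by have := le_lt_trans le_gS ltS; rewrite ltr_pM2r // ltr_nat ltnNge le_hg.
Qed.

Lemma tough_double_le_degree v z : symmetric g -> irreflexive g ->
  z != v -> ~~ g v z -> 2 * t <= (degree g v)%:R.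
Proof.
move=> sg ig zv gvz; have card2 : #|[set v; z]| = 2%N by rewrite cards2 eq_sym zv.
have := @tough_isolated_le (nbhd g v) [set v; z] z sg.
rewrite card2 degreeE; apply; last by [].
  by apply/subsetP => x; rewrite !inE => /orP[]/eqP->; rewrite ?ig.
by move=> x; rewrite !inE => /orP[]/eqP->; rewrite ?eqxx.
Qed.

End Toughness.

Lemma not_tough_witness (V : finType) (h : rel V) (t : rat) : 0 < t ->
  ~ tough h t -> exists S : {set V}, cutset h S /\ #|S|%:R < (ncomp h S)%:R * t.
Proof.
move=> t0 not_tough.
have [/existsP[S /andP[cutS ltS]]|/existsPn small] :=
  boolP [exists S : {set V}, cutset h S && (#|S|%:R < (ncomp h S)%:R * t)].
  by exists S.
by case: not_tough => S cutS; have := small S; rewrite cutS -leNgt ler_pdivlMr.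
Qed.

Lemma complete_tough (V : finType) (h : rel V) (t : rat) : symmetric h ->
  is_clique h [set: V] -> tough h t.
Proof.
move=> sh complete S; rewrite /cutset ltnNge => /negP[].
have [/existsP[x0 x0S]|/existsPn inS] := boolP [exists x0, x0 \notin S].
  apply: leq_trans (ncomp_le (R := [set x0]) sh _) _; last by rewrite cards1.
  move=> x xS; exists x0; first exact: set11.
  have [-> //|xx0] := eqVneq x x0.
  by apply: connect1; rewrite /del_verts /= xS x0S complete ?inE.
apply: leq_trans (ncomp_le (R := set0) sh _) _; last by rewrite cards0.
by move=> x; rewrite (negbTE (inS x)).
Qed.

Section SplitGraph.
Variables (V : finType) (g : rel V) (t : rat) (I : {set V}).
Hypotheses (sg : symmetric g) (ig : irreflexive g) (t0 : 0 < t) (tg : tough g t).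
Hypotheses (clI : is_clique g (~: I)) (indI : is_indep g I).

Lemma nbhd_indep_sub x : x \in I -> nbhd g x \subset ~: I.
Proof.
by move=> xI; apply/subsetP => z; rewrite !inE; apply: contraTN => zI; apply: indI.
Qed.

Section EdgeWitness.
Variables (v u w : V) (S : {set V}).
Hypotheses (vI : v \in I) (gvu : g v u) (gvw : g v w) (uw : u != w).
Hypotheses (cutS : cutset (del_edge g u w) S)
  (ltS : #|S|%:R < (ncomp (del_edge g u w) S)%:R * t).

Local Notation g' := (del_edge g u w).
Local Notation D := (del_verts g' S).
Let iso := [set y in I :\: S | nbhd g y \subset S].

Let uI : u \notin I.
Proof. by rewrite -in_setC (subsetP (nbhd_indep_sub vI)) ?inE. Qed.

Let wI : w \notin I.
Proof. by rewrite -in_setC (subsetP (nbhd_indep_sub vI)) ?inE. Qed.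

Lemma del_edge_indep x z : x \in I -> g x z -> g' x z.
Proof.
move=> xI gxz; have xu : x != u by apply: contraNneq uI => <-.
have xw : x != w by apply: contraNneq wI => <-.
by rewrite /del_edge /= gxz (negPf xu) (negPf xw).
Qed.

Lemma iso_isolated : {in iso, forall x, nbhd g x \subset S}.
Proof. by move=> x; rewrite inE => /andP[]. Qed.

Lemma iso_sub : iso \subset I :\: S.
Proof. by apply/subsetP => x; rewrite inE => /andP[]. Qed.

Lemma iso_notin_S : iso \subset ~: S.
Proof. by apply/subsetP => x /(subsetP iso_sub); rewrite !inE => /andP[]. Qed.

Lemma connect_iso_or_clique x : x \notin S ->
  x \in iso \/ exists2 z, z \in ~: I :\: S & connect D x z.
Proof.
move=> xS; have [xI|xI] := boolP (x \in I); last first.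
  by right; exists x; [rewrite !inE xI xS | exact: connect0].
have [Nx|/subsetPn[z gxz zS]] := boolP (nbhd g x \subset S).
  by left; rewrite !inE xI xS Nx.
have zI : z \in ~: I by apply: subsetP (nbhd_indep_sub xI) z gxz.
right; exists z; first by rewrite inE zS zI.
by apply: connect1; rewrite /del_verts /= xS zS del_edge_indep // -[g x z]inE.
Qed.

Lemma no_component_cover (P : {set V}) r : P \subset ~: S ->
  {in P, forall x, x != r -> nbhd g x \subset S} ->
  ~ (forall x, x \notin S -> exists2 p, p \in P & connect D x p).
Proof.
move=> PS isoP cover.
have := leq_trans (ncomp_le (del_edge_sym u w sg) cover) (ncomp_ge sg PS isoP).
by rewrite leqNgt (tough_ncomp_lt t0 tg cutS ltS).
Qed.

Lemma clique_disconnected : exists x y,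
  [/\ x \in ~: I :\: S, y \in ~: I :\: S & ~~ connect D x y].
Proof.
have [/existsP[x /existsP[y /and3P[xC yC nxy]]]|/existsPn conn] := boolP
  [exists x, exists y, [&& x \in ~: I :\: S, y \in ~: I :\: S & ~~ connect D x y]].
  by exists x, y.
exfalso; have [C0|[r rC]] := set_0Vmem (~: I :\: S).
  apply: (no_component_cover (r := v) iso_notin_S) => [x /iso_isolated //|x].
  by case/connect_iso_or_clique => [xiso|[z]]; [exists x | rewrite C0 inE].
apply: (no_component_cover (P := r |: iso) (r := r)).
- by rewrite subUset iso_notin_S sub1set inE andbT; case/setDP: rC.
- by move=> x; rewrite in_setU1 => /predU1P[->|/iso_isolated]; rewrite ?eqxx.
move=> x /connect_iso_or_clique[xiso|[z zC xz]]; first by exists x; rewrite ?setU1r.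
exists r; first exact: setU11.
by apply: connect_trans xz _; move/existsPn: (conn z) => /(_ r); rewrite zC rC negbK.
Qed.

Lemma uw_disconnected : [/\ u \notin S, w \notin S & ~~ connect D u w].
Proof.
have [x [y [xC yC nxy]]] := clique_disconnected.
have csym := sym_connect_sym (del_verts_sym S (del_edge_sym u w sg)).
have xy : x != y by apply: contraNneq nxy => ->; exact: connect0.
have [xI xS] := setDP xC; have [yI yS] := setDP yC.
have [/orP[]/andP[/eqP ex /eqP ey]|not_uw] :=
  boolP ((x == u) && (y == w) || (x == w) && (y == u)).
- by subst x y.
- by subst x y; rewrite csym.
suff : D x y by move/connect1; rewrite (negPf nxy).
by rewrite /del_verts /del_edge /= xS yS (clI xI yI xy) not_uw.
Qed.

Lemma common_nbhd_in_S z : g u z -> g z w -> z \in S.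
Proof.
move=> guz gzw; have [uS wS nuw] := uw_disconnected; apply: contraNT nuw => zS.
have zu : z != u by apply: contraTneq guz => ->; rewrite ig.
have zw : z != w by apply: contraTneq gzw => ->; rewrite ig.
apply: (@connect_trans _ _ z); apply: connect1.
  by rewrite /del_verts /del_edge /= guz uS zS eqxx (negPf zw) (negPf uw).
by rewrite /del_verts /del_edge /= gzw wS zS (negPf zu) (negPf zw).
Qed.

Lemma clique_in_S z : z \notin I -> z != u -> z != w -> z \in S.
Proof.
have uC : u \in ~: I by rewrite inE.
have wC : w \in ~: I by rewrite inE.
move=> zI zu zw; have zC : z \in ~: I by rewrite inE.
by apply: common_nbhd_in_S; apply: clI; rewrite // eq_sym.
Qed.

Lemma v_in_S : v \in S.
Proof. by apply: common_nbhd_in_S; rewrite // sg. Qed.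

Lemma ncomp_del_edge_le : (ncomp g' S <= 2 + #|iso|)%N.
Proof.
have [uS wS _] := uw_disconnected.
apply: leq_trans (ncomp_le (R := [set u; w] :|: iso) (del_edge_sym u w sg) _) _.
  move=> x /connect_iso_or_clique[xiso|[z zC xz]].
    by exists x; rewrite ?in_setU ?xiso ?orbT.
  exists z => //; have [zI zS] := setDP zC; rewrite inE in zI.
  rewrite in_setU in_set2; apply/orP; left.
  by apply: contraR zS => /norP[zu zw]; rewrite clique_in_S.
by rewrite cardsU cards2 uw leq_subr.
Qed.

Lemma card_S_lt : #|S|%:R < (2 + #|iso|)%:R * t.
Proof. by apply: lt_le_trans ltS _; rewrite ler_pM2r // ler_nat ncomp_del_edge_le. Qed.

Lemma card_clique_le : (#|~: I| + #|S :&: I| <= #|S| + 2)%N.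
Proof.
have sub : ~: I :\: [set u; w] \subset S :\: I.
  apply/subsetP => z; rewrite !inE negb_or => /andP[/andP[zu zw] zI].
  by rewrite zI clique_in_S.
have uw2 : (#|~: I :&: [set u; w]| <= 2)%N.
  by rewrite (leq_trans (subset_leq_card (subsetIr _ _))) // cards2 uw.
rewrite -(cardsID [set u; w] (~: I)) -(cardsID I S) -addnA [X in (_ <= X)%N]addnC.
by apply: leq_add uw2 _; rewrite addnC leq_add2l subset_leq_card.
Qed.

Lemma card_clique_le_S : (#|~: I| <= #|S|.+1)%N.
Proof.
have SI : (0 < #|S :&: I|)%N by apply/card_gt0P; exists v; rewrite inE v_in_S vI.
have := leq_trans (leq_add (leqnn #|~: I|) SI) card_clique_le.
by rewrite addn1 addn2 ltnS.
Qed.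

Lemma card_iso_le : (#|S :&: I| + #|iso| <= #|I|)%N.
Proof.
by rewrite -(cardsID S I) setIC leq_add2l subset_leq_card ?iso_sub.
Qed.

Lemma indep_notin_S y : y \in I -> y != v -> y \notin S.
Proof.
move=> yI yv; apply/negP => yS.
have SI2 : (2 <= #|S :&: I|)%N.
  have : [set v; y] \subset S :&: I.
    by apply/subsetP => z; rewrite !inE => /orP[]/eqP->; rewrite ?v_in_S ?vI ?yS ?yI.
  by move/subset_leq_card; rewrite cards2 eq_sym yv.
have iso_le := card_iso_le.
have indep_le : #|I|%:R * t <= #|~: I|%:R.
  apply: (tough_isolated_le (r := v) t0 tg sg); first by rewrite setCK.
    by move=> x xI _; exact: nbhd_indep_sub.
  exact: leq_trans SI2 (leq_trans (leq_addr _ _) iso_le).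
have : (2 + #|iso|)%:R * t <= #|I|%:R * t.
  by rewrite ler_pM2r // ler_nat (leq_trans (leq_add SI2 (leqnn _)) iso_le).
have : #|~: I|%:R <= #|S|%:R :> rat.
  by rewrite ler_nat -(leq_add2r 2) (leq_trans _ card_clique_le) // leq_add2l.
by have := card_S_lt; lra.
Qed.

Lemma indep_nonadj y : y \in I -> y != v -> ~~ g y u.
Proof.
move=> yI yv; apply/negP => gyu; have [uS wS _] := uw_disconnected.
have yS := indep_notin_S yI yv.
have gyw : ~~ g y w by apply: contraNN yS => gyw; apply: common_nbhd_in_S; rewrite // sg.
have yiso : y \notin iso.
  by apply: contraNN uS => /iso_isolated /subsetP; apply; rewrite inE.
have iso_I : iso \subset I by apply: subset_trans iso_sub (subsetDl _ _).
have wyiso : w \notin y |: iso.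
  rewrite in_setU1 negb_or; apply/andP; split; first by apply: contraNneq wI => ->.
  by apply: contraNN wI => /(subsetP iso_I).
have P_le : (2 + #|iso|)%:R * t <= #|~: I :\ w|%:R.
  have := @tough_isolated_le _ _ _ t0 tg (~: I :\ w) (w |: (y |: iso)) w sg.
  rewrite !cardsU1 wyiso yiso add1n; apply=> //.
    apply/subsetP => x /setU1P[->|/setU1P[->|/(subsetP iso_I) xI]];
      by rewrite !inE ?eqxx ?yI ?xI /= ?andbF.
  move=> x /setU1P[->|/setU1P[-> _|xiso _]]; rewrite ?eqxx //.
    apply/subsetP => z zN; rewrite !inE -in_setC (subsetP (nbhd_indep_sub yI)) // andbT.
    by apply: contraNneq gyw => <-; rewrite -[g y z]inE.
  have xI := subsetP iso_I x xiso.
  apply/subsetP => z zN; rewrite !inE -in_setC (subsetP (nbhd_indep_sub xI)) // andbT.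
  by apply: contraNneq wS => <-; apply: subsetP (iso_isolated xiso) z zN.
have : #|~: I :\ w|%:R <= #|S|%:R :> rat.
  by have := card_clique_le_S; rewrite (cardsD1 w (~: I)) inE wI /= add1n ltnS ler_nat.
by have := card_S_lt; lra.
Qed.

Lemma clique_card_lt : #|~: I|%:R - 1 < (1 + #|I|)%:R * t.
Proof.
have SI : (0 < #|S :&: I|)%N by apply/card_gt0P; exists v; rewrite inE v_in_S vI.
have : (2 + #|iso|)%:R * t <= (1 + #|I|)%:R * t.
  rewrite ler_pM2r // ler_nat -add1n -addnA leq_add2l.
  by rewrite (leq_trans _ card_iso_le) ?leq_add2r.
have : #|~: I|%:R <= #|S|%:R + 1 :> rat by rewrite natr1 ler_nat card_clique_le_S.
by have := card_S_lt; lra.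
Qed.

End EdgeWitness.

Hypothesis minimal : forall u w, g u w -> ~ tough (del_edge g u w) t.

Lemma indep_private_nbhd v x y : v \in I -> (1 < degree g v)%N ->
  g v x -> y \in I -> y != v -> ~~ g y x.
Proof.
move=> vI deg2 gvx yI yv; have [x' gvx' x'x] := nbhd_other x deg2.
have /(subsetP (nbhd_indep_sub vI)) xC : x \in nbhd g v by rewrite inE.
have /(subsetP (nbhd_indep_sub vI)) x'C : x' \in nbhd g v by rewrite inE.
have xx' : x != x' by rewrite eq_sym.
have [S [cutS ltS]] := not_tough_witness t0 (minimal (clI xC x'C xx')).
exact: (indep_nonadj vI gvx gvx' xx' cutS ltS yI yv).
Qed.

Lemma indep_degree_clique_lt v : v \in I -> (1 < degree g v)%N ->
  #|~: I|%:R - 1 < (1 + #|I|)%:R * t.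
Proof.
move=> vI; rewrite degreeE => /card_gt1P[u [w [uN wN uw]]].
have [uC wC] := (subsetP (nbhd_indep_sub vI) u uN, subsetP (nbhd_indep_sub vI) w wN).
have [S [cutS ltS]] := not_tough_witness t0 (minimal (clI uC wC uw)).
by rewrite !inE in uN wN; exact: clique_card_lt vI uN wN uw cutS ltS.
Qed.

Lemma card_indep_le1 v : v \in I -> (1 < degree g v)%N -> (#|I| <= 1)%N.
Proof.
move=> vI deg2; rewrite leqNgt; apply/negP => I2.
have [z zI zv] : exists2 z, z \in I & z != v.
  have [a [b [aI bI ab]]] := card_gt1P I2.
  by have [av|] := eqVneq a v; [exists b; rewrite // -av eq_sym | exists a].
have N_le := tough_double_le_degree t0 tg sg ig zv (indI vI zI).
have I_le : #|I|%:R * t <= #|~: I :\: nbhd g v|%:R.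
  apply: (tough_isolated_le (r := v) t0 tg sg) => //.
    by apply/subsetP => x xI; rewrite !inE xI /= andbF.
  move=> x xI xv; apply/subsetP => y gxy; rewrite !inE.
  have /(subsetP (nbhd_indep_sub xI)) := gxy; rewrite inE => -> /=; rewrite andbT.
  apply: contraTN gxy => gvy.
  by rewrite inE (negPf (indep_private_nbhd vI deg2 gvy xI xv)).
have split_card : #|~: I| = (#|~: I :\: nbhd g v| + #|nbhd g v|)%N.
  by rewrite -(cardsID (nbhd g v) (~: I)) addnC (setIidPr (nbhd_indep_sub vI)).
have clique_lt := indep_degree_clique_lt vI deg2.
rewrite degreeE in deg2 N_le; have : 2%:R <= #|nbhd g v|%:R :> rat by rewrite ler_nat.
rewrite split_card !natrD mulrDl mul1r in clique_lt.
lra.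
Qed.

Lemma clique_sub_nbhd v : v \in I -> (1 < degree g v)%N -> (#|I| <= 1)%N ->
  ~: I \subset nbhd g v.
Proof.
move=> vI deg2 I1; apply/subsetP => z zC; apply: contraT => zN.
have zv : z != v by apply: contraTneq zC => ->; rewrite inE vI.
have gvz : ~~ g v z by rewrite inE in zN.
have N_le := tough_double_le_degree t0 tg sg ig zv gvz.
have N_lt : (#|nbhd g v| < #|~: I|)%N.
  by apply/proper_card/properP; split; [exact: nbhd_indep_sub | exists z].
have : (1 + #|I|)%:R * t <= 2%:R * t by rewrite ler_pM2r // ler_nat.
have : #|nbhd g v|%:R + 1 <= #|~: I|%:R :> rat by rewrite natr1 ler_nat.
have := indep_degree_clique_lt vI deg2; rewrite degreeE in N_le.
lra.
Qed.

Lemma indep_degree_le1 v : v \in I -> ~ is_clique g [set: V] ->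
  (degree g v <= 1)%N.
Proof.
move=> vI ncomplete; rewrite leqNgt; apply/negP => deg2; apply: ncomplete => x y _ _ xy.
have I1 := card_indep_le1 vI deg2; have /card_le1_eqP indep_eq := I1.
have /subsetP CN := clique_sub_nbhd vI deg2 I1.
have [xI|xC] := boolP (x \in I); have [yI|yC] := boolP (y \in I).
- by move: xy; rewrite (indep_eq v x vI xI) (indep_eq v y vI yI) eqxx.
- by have := CN y; rewrite !inE -(indep_eq v x vI xI) => ->.
- by have := CN x; rewrite !inE -(indep_eq v y vI yI) sg => ->.
- by apply: clI; rewrite ?inE.
Qed.

End SplitGraph.

Theorem mainTheorem8 (V : finType) (g : rel V) (t : rat) :
  simple_graph g -> 0 < t -> minimally_tough g t -> split_graph g ->
  exists v : V, ((degree g v)%:Z = Num.ceil (2 * t))%R.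
Proof.
move=> [sg ig] t0 [[tg tmax] minimal] [K [I [KI KUI clK indI]]].
have clI : is_clique g (~: I) by rewrite -(split_setC KI KUI).
have ncomplete : ~ is_clique g [set: V].
  by move/(complete_tough (t + 1) sg); apply: tmax; lra.
have [I0|[v vI]] := set_0Vmem I; first by case: ncomplete; rewrite -setC0 -I0.
have deg_le1 := indep_degree_le1 sg ig t0 tg clI indI minimal vI ncomplete.
have [z zv gvz] := nonadj_of_degree_le1 sg ncomplete deg_le1.
have two_le := tough_double_le_degree t0 tg sg ig zv gvz.
have deg1 : degree g v = 1%N.
  by move: two_le deg_le1; case: (degree g v) => [|[|]] // two_le _; exfalso; lra.
exists v; rewrite deg1 in two_le *; apply/eqP; rewrite eq_le; apply/andP; split.
  by rewrite -gtz0_ge1 ceil_gt_int mulr_gt0.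
by rewrite ceil_le_int.
Qed.
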